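(* Let $J\subseteq[n]$ and let $\pi,\hat\pi\in S_J$ be joined by an edge of the bridge polytope $\mathrm{Br}_J$, where $\hat\pi=(i\,\ell)\pi$ for some $i<\ell$. Then each of $i+1,i+2,\dots,\ell-1$ is a fixed point of both $\pi$ and $\hat\pi$.
   Context: For $J\subseteq[n]$, $S_J=\{\pi\in S_n:\ \pi(j)\ge j \text{ for } j\in J,\ \pi(j)\le j \text{ for } j\notin J\}$ and $\mathrm{Br}_J=\operatorname{conv}\{(\pi(1),\dots,\pi(n)):\pi\in S_J\}\subset\mathbb{R}^n$, each $\pi\in S_J$ being identified with the vertex $(\pi(1),\dots,\pi(n))$. For a transposition $(i\,\ell)$, $(i\,\ell)\pi$ denotes $(i\,\ell)\circ\pi$, the permutation obtained from $\pi$ by swapping the values $i$ and $\ell$. *)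

From HB Require Import structures.
From mathcomp Require Import all_boot all_order all_algebra all_fingroup.
Set Implicit Arguments. Unset Strict Implicit. Unset Printing Implicit Defensive.
Import Order.TTheory GRing.Theory Num.Theory.
Local Open Scope ring_scope.

(* Indices [n] = {1..n} are represented by 'I_n = {0..n-1}; value j+1 <-> j. *)

Definition in_SJ (n : nat) (J : {set 'I_n}) (p : {perm 'I_n}) : bool :=
  [forall j : 'I_n, if j \in J then (j <= p j)%N else (p j <= j)%N].

Definition perm_vec (R : realFieldType) (n : nat) (p : {perm 'I_n}) : 'rV[R]_n :=
  \row_(j < n) ((p j).+1)%:R.

Definition in_Br (R : realFieldType) (n : nat) (J : {set 'I_n}) (x : 'rV[R]_n) : Prop :=
  exists w : {perm 'I_n} -> R,
    [/\ forall s, 0 <= w s,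
        forall s, ~~ in_SJ J s -> w s = 0,
        \sum_(s : {perm 'I_n}) w s = 1
      & x = \sum_(s : {perm 'I_n}) w s *: perm_vec R s].

Definition rdot (R : realFieldType) (n : nat) (c x : 'rV[R]_n) : R :=
  \sum_(i < n) c 0 i * x 0 i.

Definition in_segment (R : realFieldType) (n : nat) (v w x : 'rV[R]_n) : Prop :=
  exists t : R, [/\ 0 <= t, t <= 1 & x = (1 - t) *: v + t *: w].

Definition is_edge (R : realFieldType) (n : nat) (P : 'rV[R]_n -> Prop)
  (v w : 'rV[R]_n) : Prop :=
  v <> w /\
  exists c : 'rV[R]_n,
    (forall x, P x -> rdot c x <= rdot c v) /\
    (forall x, (P x /\ rdot c x = rdot c v) <-> in_segment v w x).

(* Let [c] be a functional whose maximizers on [Br_J] are exactly the edge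
   [[pi, (i l) pi]], and let [b] be the position of the value [l] in [pi]. Both
   endpoints maximize [c], so [c] takes equal values at the positions of [i]
   and [l]. If [pi q] lies strictly between [i] and [l], swapping it with an
   admissible one of [i], [l] leaves [S_J] invariant and leaves the edge, so it
   strictly lowers [c]; this gives [c_q < c_b] when [l] is admissible at [q] and
   [c_q > c_b] when [i] is. Hence no position outside the gap (i, l) carries a
   value inside it (both [i] and [l] would be admissible there), so [pi]
   permutes the gap. Resetting [pi] to the identity on the gap then yields a
   vertex of [S_J] whose [c]-value is at least that of [pi], term by term, and
   strictly less as soon as [pi] moves a gap point. *)
From HB Require Import structures.
From mathcomp Require Import all_boot all_order all_algebra all_fingroup.
From mathcomp Require Import zify ring lra.
Import Order.TTheory GRing.Theory Num.Theory.
Set Implicit Arguments. Unset Strict Implicit.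

Section PermutationFacts.
Variable T : finType.

Lemma preimset_perm_eq (p : {perm T}) (P : {set T}) :
  p @^-1: P \subset P -> p @^-1: P = P.
Proof.
by move=> sub; apply/setP/subset_cardP => //; rewrite card_preimset //; exact: perm_inj.
Qed.

Lemma perm_id_on (p : {perm T}) (P : {set T}) : p @^-1: P = P ->
  exists s : {perm T}, forall x, s x = if x \in P then x else p x.
Proof.
move=> stableP.
have pP x : (p x \in P) = (x \in P) by rewrite -[in RHS]stableP inE.
pose g x := if x \in P then x else p x.
have g_inj : injective g.
  move=> x y; rewrite /g; case: ifP => Px; case: ifP => Py // Exy.
  - by move: Px; rewrite Exy pP Py.
  - by move: Py; rewrite -Exy pP Px.
  - exact: perm_inj Exy.
by exists (perm g_inj) => x; rewrite permE.
Qed.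

End PermutationFacts.

Section PermutationVertices.
Local Open Scope ring_scope.
Variables (R : realFieldType) (n : nat) (J : {set 'I_n}).

Definition admissible (j y : 'I_n) : bool :=
  if j \in J then (j <= y)%N else (y <= j)%N.

Lemma in_SJP (s : {perm 'I_n}) :
  reflect (forall j, admissible j (s j)) (in_SJ J s).
Proof. exact: forallP. Qed.

Lemma admissible_between (j y1 y2 y : 'I_n) :
  admissible j y1 -> admissible j y2 -> (y1 <= y <= y2)%N -> admissible j y.
Proof. by rewrite /admissible; case: (j \in J) => ? ? ?; lia. Qed.

Lemma perm_vec_in_Br (s : {perm 'I_n}) : in_SJ J s -> in_Br J (perm_vec R s).
Proof.
move=> sSJ; exists (fun t => if t == s then 1 else 0); split.
- by move=> t; case: eqP.
- by move=> t; case: eqP => // ->; rewrite sSJ.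
- by rewrite (bigD1 s) //= eqxx big1 ?addr0 // => t /negbTE ->.
- rewrite (bigD1 s) //= eqxx scale1r big1 ?addr0 // => t /negbTE ->.
  by rewrite scale0r.
Qed.

Definition perm_rdot (c : 'rV[R]_n) (s : {perm 'I_n}) : R := rdot c (perm_vec R s).

Lemma perm_rdotB c s p :
  perm_rdot c s - perm_rdot c p = \sum_j c 0 j * ((s j)%:R - (p j)%:R).
Proof.
rewrite /perm_rdot /rdot -sumrB; apply: eq_bigr => j _; rewrite !mxE -!natr1; ring.
Qed.

Lemma perm_rdot_tperm c p (x y : 'I_n) : x != y ->
  perm_rdot c (p * tperm x y)%g - perm_rdot c p =
  (c 0 (p^-1 x)%g - c 0 (p^-1 y)%g) * ((y : nat)%:R - (x : nat)%:R).
Proof.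
move=> neq_xy; rewrite perm_rdotB (reindex_inj (@perm_inj _ (p^-1)%g)) /=.
rewrite (bigD1 x) // (bigD1 y) 1?eq_sym //= big1 ?addr0.
  by rewrite !permM !permKV tpermL tpermR; ring.
move=> j /andP [nxj nyj].
by rewrite permM permKV tpermD ?subrr ?mulr0 // eq_sym.
Qed.

Lemma perm_rdot_perm_shift c (s p : {perm 'I_n}) (a : R) :
  perm_rdot c s - perm_rdot c p = \sum_j (c 0 j - a) * ((s j)%:R - (p j)%:R).
Proof.
have sum_vals (q : {perm 'I_n}) :
    \sum_j ((q j : nat)%:R : R) = \sum_(j < n) (j : nat)%:R.
  by rewrite [RHS](reindex_inj (@perm_inj _ q)).
have -> : \sum_j (c 0 j - a) * ((s j)%:R - (p j)%:R) =
          \sum_j c 0 j * ((s j)%:R - (p j)%:R) - a * \sum_j ((s j)%:R - (p j)%:R).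
  by rewrite mulr_sumr -sumrB; apply: eq_bigr => j _; ring.
by rewrite sumrB !sum_vals subrr mulr0 subr0 perm_rdotB.
Qed.

End PermutationVertices.

Section BridgeEdge.
Local Open Scope ring_scope.
Variables (R : realFieldType) (n : nat) (J : {set 'I_n}).
Variables (pi : {perm 'I_n}) (i l : 'I_n) (c : 'rV[R]_n).
Local Notation pih := (pi * tperm i l)%g.
Hypotheses (pi_SJ : in_SJ J pi) (pih_SJ : in_SJ J pih) (lt_il : (i < l)%N).
Hypothesis c_max : forall x, in_Br J x -> rdot c x <= rdot c (perm_vec R pi).
Hypothesis c_face : forall x,
  (in_Br J x /\ rdot c x = rdot c (perm_vec R pi)) <->
  in_segment (perm_vec R pi) (perm_vec R pih) x.

(* Every point of the segment agrees with [pi] at a position where [pi] and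
   [pih] agree, so a vertex disagreeing with [pi] there lies off the edge. *)
Lemma perm_rdot_lt_off_edge (s : {perm 'I_n}) q :
  in_SJ J s -> pih q = pi q -> s q != pi q -> perm_rdot c s < perm_rdot c pi.
Proof.
move=> sSJ pihq neq_q; rewrite lt_neqAle c_max ?andbT; last exact: perm_vec_in_Br.
apply/eqP => eq_rdot.
have [t [_ _ on_seg]] := proj1 (c_face _) (conj (perm_vec_in_Br R sSJ) eq_rdot).
have := congr1 (fun x : 'rV[R]_n => x 0 q) on_seg; rewrite !mxE pihq => eq_q.
have : ((s q).+1)%:R = ((pi q).+1)%:R :> R by rewrite eq_q; ring.
move/eqP; rewrite eqr_nat eqSS => /eqP /val_inj eq_sq.
by rewrite eq_sq eqxx in neq_q.
Qed.

Lemma rdot_swap_ends : c 0 (pi^-1 i)%g = c 0 (pi^-1 l)%g.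
Proof.
have on_seg : in_segment (perm_vec R pi) (perm_vec R pih) (perm_vec R pih).
  by exists 1; split; rewrite ?ler01 // subrr scale0r add0r scale1r.
have [_ eq_rdot] := proj2 (c_face _) on_seg.
have neq_il : i != l by rewrite -val_eqE ltn_eqF.
have := perm_rdot_tperm c pi neq_il.
rewrite [perm_rdot c pih]eq_rdot subrr => /esym/eqP; rewrite mulf_eq0 subr_eq0.
by rewrite subr_eq0 eqr_nat gtn_eqF // orbF => /eqP.
Qed.

Lemma admissible_swap_ends q (y : 'I_n) :
  pi q = i \/ pi q = l -> (i <= y <= l)%N -> admissible J q y.
Proof.
move=> pq_end; have /in_SJP/(_ q) := pi_SJ; have /in_SJP/(_ q) := pih_SJ.
rewrite permM; case: pq_end => ->; rewrite ?tpermL ?tpermR => A1 A2.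
- exact: admissible_between.
- exact: admissible_between.
Qed.

Lemma in_SJ_swap_into_gap q (x : 'I_n) :
  (i < pi q < l)%N -> x = i \/ x = l -> admissible J q x ->
  in_SJ J (pi * tperm x (pi q))%g.
Proof.
move=> pq_gap x_end qx; apply/in_SJP => j; rewrite permM.
case: tpermP => [pj_x | /perm_inj -> // | _ _]; last exact: (in_SJP _ _ pi_SJ).
by apply: admissible_swap_ends; [case: x_end => <-; auto | lia].
Qed.

Lemma gap_value_sign q (x : 'I_n) :
  (i < pi q < l)%N -> x = i \/ x = l -> admissible J q x ->
  (c 0 (pi^-1 l)%g - c 0 q) * ((pi q : nat)%:R - (x : nat)%:R) < 0.
Proof.
move=> pq_gap x_end qx.
have neq_x : x != pi q by rewrite -val_eqE /=; case: x_end => ->; lia.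
have := perm_rdot_tperm c pi neq_x; rewrite permK.
have -> : c 0 (pi^-1 x)%g = c 0 (pi^-1 l)%g by case: x_end => ->; rewrite ?rdot_swap_ends.
move <-; rewrite subr_lt0.
apply: (perm_rdot_lt_off_edge (q := q) (in_SJ_swap_into_gap pq_gap x_end qx)).
- by rewrite permM tpermD // -val_eqE /=; lia.
- by rewrite permM tpermR.
Qed.

Lemma gap_coef_lt q :
  (i < pi q < l)%N -> admissible J q l -> c 0 q < c 0 (pi^-1 l)%g.
Proof.
move=> pq_gap ql; have := gap_value_sign pq_gap (or_intror erefl) ql.
have : ((pi q : nat)%:R : R) < (l : nat)%:R by rewrite ltr_nat; lia.
nra.
Qed.

Lemma gap_coef_gt q :
  (i < pi q < l)%N -> admissible J q i -> c 0 (pi^-1 l)%g < c 0 q.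
Proof.
move=> pq_gap qi; have := gap_value_sign pq_gap (or_introl erefl) qi.
have : ((i : nat)%:R : R) < (pi q : nat)%:R by rewrite ltr_nat; lia.
nra.
Qed.

Let gap := [set x : 'I_n | (i < x < l)%N].

Lemma gap_preimset_sub : pi @^-1: gap \subset gap.
Proof.
have /in_SJP pi_adm := pi_SJ.
apply/subsetP => q; rewrite !inE => pq_gap; apply: contraT => q_out.
have ql : admissible J q l.
  by move: (pi_adm q); rewrite /admissible; case: (q \in J); lia.
have qi : admissible J q i.
  by move: (pi_adm q); rewrite /admissible; case: (q \in J); lia.
by have := lt_trans (gap_coef_gt pq_gap qi) (gap_coef_lt pq_gap ql); rewrite ltxx.
Qed.

Lemma gap_fixed (k : 'I_n) : (i < k < l)%N -> pi k = k.
Proof.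
have /in_SJP pi_adm := pi_SJ.
have gap_stable : pi @^-1: gap = gap := preimset_perm_eq gap_preimset_sub.
have pi_gap (q : 'I_n) : (i < q < l)%N -> (i < pi q < l)%N.
  move=> q_gap; have : q \in pi @^-1: gap by rewrite gap_stable inE.
  by rewrite !inE.
have [s sE] := perm_id_on gap_stable.
have s_SJ : in_SJ J s.
  apply/in_SJP => j; rewrite sE; case: ifP => _ //.
  by rewrite /admissible; case: (j \in J).
have s_ge : 0 <= perm_rdot c s - perm_rdot c pi.
  rewrite (perm_rdot_perm_shift c s pi (c 0 (pi^-1 l)%g)); apply: sumr_ge0 => j _.
  rewrite sE inE; case: ifP => j_gap; last by rewrite subrr mulr0.
  have pj_gap := pi_gap j j_gap.
  move: (pi_adm j); rewrite /admissible; case jJ: (j \in J) => j_pj.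
  - have jl : admissible J j l by rewrite /admissible jJ; lia.
    have := gap_coef_lt pj_gap jl.
    have : ((j : nat)%:R : R) <= (pi j : nat)%:R by rewrite ler_nat.
    nra.
  - have ji : admissible J j i by rewrite /admissible jJ; lia.
    have := gap_coef_gt pj_gap ji.
    have : ((pi j : nat)%:R : R) <= (j : nat)%:R by rewrite ler_nat.
    nra.
move=> k_gap; apply/eqP; apply: contraT => moved.
have pk_gap := pi_gap k k_gap.
have : perm_rdot c s < perm_rdot c pi.
  apply: (perm_rdot_lt_off_edge (q := k) s_SJ).
  - by rewrite permM tpermD // -val_eqE /=; lia.
  - by rewrite sE inE k_gap eq_sym.
by rewrite -subr_lt0 ltNge s_ge.
Qed.

End BridgeEdge.

Theorem proposition4p6 (R : realFieldType) (n : nat) (J : {set 'I_n})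
  (pi : {perm 'I_n}) (i l : 'I_n) :
  in_SJ J pi -> in_SJ J (pi * tperm i l)%g -> (i < l)%N ->
  is_edge (@in_Br R n J) (perm_vec R pi) (perm_vec R (pi * tperm i l)%g) ->
  forall k : 'I_n, (i < k)%N -> (k < l)%N ->
    pi k = k /\ (pi * tperm i l)%g k = k.
Proof.
move=> pi_SJ pih_SJ lt_il [_ [c [c_max c_face]]] k lt_ik lt_kl.
have fixed_k : pi k = k.
  by apply: (gap_fixed pi_SJ pih_SJ lt_il c_max c_face); rewrite lt_ik.
have neq_ik : i != k by rewrite -val_eqE ltn_eqF.
have neq_lk : l != k by rewrite -val_eqE gtn_eqF.
by split=> //; rewrite permM fixed_k tpermD.
Qed.
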